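(* Let $p\ge 1$, let $F:\mathbb{R}^p\to\mathbb{R}^p$ and $G(\boldsymbol{x}) := F(\boldsymbol{x})-\boldsymbol{x}$. Let $\boldsymbol{x}^\ast\in\mathbb{R}^p$ and let $M\in\mathbb{R}^{p\times p}$ be a fixed non-singular symmetric matrix defining $\|A\|_M := \|MAM\|_F$. Assume: (A1) $G$ is differentiable in an open convex set $D$ containing $\boldsymbol{x}^\ast$, $G(\boldsymbol{x}^\ast)=0$, $dG(\boldsymbol{x}^\ast)$ is non-singular, and for some constants $d>0$ and $K$ we have $\|dG(\boldsymbol{x})-dG(\boldsymbol{x}^\ast)\|\le K\|\boldsymbol{x}-\boldsymbol{x}^\ast\|^d$ for all $\boldsymbol{x}\in D$. (A2) There are a neighborhood $N_1$ of $\boldsymbol{x}^\ast$ with $N_1\subset D\cap S$ on which the update $\bar{\boldsymbol{x}}=\boldsymbol{x}-HG(\boldsymbol{x})$ is well-defined, a neighborhood $N_2$ of $dG(\boldsymbol{x}^\ast)^{-1}$ consisting of non-singular matrices on which the update $H\mapsto\bar H$ is well-defined, and non-negative constants $\alpha_1,\alpha_2$ such that for every $(\boldsymbol{x},H)\in N_1\times N_2$, $$\|\bar H-dG(\boldsymbol{x}^\ast)^{-1}\|_M\le\Big[1+\alpha_1\max\{\|F(\boldsymbol{x})-\boldsymbol{x}^\ast\|^d,\|\boldsymbol{x}-\boldsymbol{x}^\ast\|^d\}\Big]\|H-dG(\boldsymbol{x}^\ast)^{-1}\|_M+\alpha_2\max\{\|F(\boldsymbol{x})-\boldsymbol{x}^\ast\|^d,\|\boldsymbol{x}-\boldsymbol{x}^\ast\|^d\}.$$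 Then for each $r\in(0,1)$ there exist positive constants $\epsilon(r)$ and $\delta(r)$ such that whenever $\|\boldsymbol{x}_0-\boldsymbol{x}^\ast\|<\epsilon(r)$ and $\|H_0-dG(\boldsymbol{x}^\ast)^{-1}\|_M<\delta(r)$, the sequence defined by $\boldsymbol{x}_{k+1}=\boldsymbol{x}_k-H_kG(\boldsymbol{x}_k)$, $H_{k+1}=\bar H$ evaluated at $(\boldsymbol{x}_k,H_k)$, is well-defined and converges to $\boldsymbol{x}^\ast$. Furthermore $\|\boldsymbol{x}_{k+1}-\boldsymbol{x}^\ast\|\le r\|\boldsymbol{x}_k-\boldsymbol{x}^\ast\|$ for each $k\ge 0$, and the sequences $\{\|H_k\|\}$ and $\{\|H_k^{-1}\|\}$ are uniformly bounded.
   Context: $F$ is a majorization–minimization (MM) algorithm map and $G(\boldsymbol{x})=F(\boldsymbol{x})-\boldsymbol{x}$ its residual; $dG$ denotes the Jacobian of $G$. $\|\cdot\|$ is a chosen vector norm on $\mathbb{R}^p$ and, for matrices, its induced operator norm; $\|\cdot\|_F$ is the Frobenius norm. Standing assumption: the MM map is locally convergent to $\boldsymbol{x}^\ast$ in a neighborhood $S$ of $\boldsymbol{x}^\ast$ with linear rate $\tau$, i.e. $\|F(\boldsymbol{x})-\boldsymbol{x}^\ast\|\le\tau\|\boldsymbol{x}-\boldsymbol{x}^\ast\|$ for all $\boldsymbol{x}\in S$, with $\tau\in(0,1)$. For a pair $(\boldsymbol{x},H)$ with $\boldsymbol{x}\in\mathbb{R}^p$, $H\in\mathbb{R}^{p\times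 p}$, define $\boldsymbol{u}=F(\boldsymbol{x})-\boldsymbol{x}$, $\boldsymbol{v}=G(F(\boldsymbol{x}))-G(\boldsymbol{x})$, and the updates $\bar{\boldsymbol{x}}=\boldsymbol{x}-HG(\boldsymbol{x})$ and $\bar H=H-H\frac{\boldsymbol{v}\boldsymbol{v}^T}{\boldsymbol{v}^T\boldsymbol{v}}+\frac{\boldsymbol{u}\boldsymbol{v}^T}{\boldsymbol{v}^T\boldsymbol{v}}$ (defined when $\boldsymbol{v}\neq 0$). *)

From HB Require Import structures.
From mathcomp Require Import all_boot all_order all_algebra.
From mathcomp Require Import all_classical all_reals all_analysis.
Set Implicit Arguments. Unset Strict Implicit. Unset Printing Implicit Defensive.
Import Order.TTheory GRing.Theory Num.Theory.
Import numFieldNormedType.Exports.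
Local Open Scope classical_set_scope.
Local Open Scope ring_scope.

Section Defs.
Context {R : realType} {p : nat}.

Definition is_vnorm (nv : 'cV[R]_p -> R) : Prop :=
  [/\ forall x, 0 <= nv x,
      forall x, nv x = 0 -> x = 0,
      forall (a : R) x, nv (a *: x) = `|a| * nv x &
      forall x y, nv (x + y) <= nv x + nv y].

Definition opnorm (nv : 'cV[R]_p -> R) (A : 'M[R]_p) : R :=
  sup [set nv (A *m v) | v in [set v | nv v <= 1]].

Definition frob (A : 'M[R]_p) : R :=
  Num.sqrt (\sum_(i < p) \sum_(j < p) A i j ^+ 2).
Definition normM (M A : 'M[R]_p) : R := frob (M *m A *m M).

Definition resid (F : 'cV[R]_p -> 'cV[R]_p) (x : 'cV[R]_p) : 'cV[R]_p := F x - x.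

Definition uvec F (x : 'cV[R]_p) := F x - x.
Definition vvec F (x : 'cV[R]_p) := resid F (F x) - resid F x.

Definition xbar F (x : 'cV[R]_p) (H : 'M[R]_p) := x - H *m resid F x.

(* H_bar = H - H v v^T/(v^T v) + u v^T/(v^T v); convention: H_bar = H when v = 0
   (the update is undefined there; this only happens at the fixed point). *)
Definition Hbar F (x : 'cV[R]_p) (H : 'M[R]_p) : 'M[R]_p :=
  let u := uvec F x in let v := vvec F x in
  let vtv := (v^T *m v) 0 0 in
  if v == 0 then H
  else H - vtv^-1 *: (H *m (v *m v^T)) + vtv^-1 *: (u *m v^T).

Fixpoint qn_iter F (x0 : 'cV[R]_p) (H0 : 'M[R]_p) (k : nat) : 'cV[R]_p * 'M[R]_p :=
  match k with
  | 0 => (x0, H0)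
  | k'.+1 => let xH := qn_iter F x0 H0 k' in (xbar F xH.1 xH.2, Hbar F xH.1 xH.2)
  end.

End Defs.

(* Write [A] for [dG xs].  Near [xs] we have [G x = A (x - xs) + o(x - xs)], hence
   [x_bar - xs = (A^-1 - H) A (x - xs) - H o(x - xs)]: one step contracts by the factor [r]
   as soon as [H] is close enough to [A^-1] and [x] close enough to [xs].  By (A2), and
   because [F] is non-expansive near [xs], the distance [||H_k - A^-1||_M] grows by at most
   [c ||x_k - xs||^d] per step; as [||x_k - xs||^d] decays like [(r^d)^k], the quantity
   [||H_k - A^-1||_M + c / (1 - r^d) ||x_k - xs||^d] never increases, so the iterates stay in
   the region where the one-step contraction holds.  The bounds on [H_k^-1] come from the
   perturbation lemma for inverses, and [v_k <> 0] for [x_k <> xs] because otherwise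
   [A^2 (x_k - xs)] would be of the order of the linearisation errors.  All estimates go
   through the entrywise max-norm of matrices, which is equivalent to the given norm by
   compactness of the unit sphere. *)

From HB Require Import structures.
From mathcomp Require Import all_boot all_order all_algebra.
From mathcomp Require Import all_classical all_reals all_analysis.
From mathcomp Require Import ring lra.
Import Order.TTheory GRing.Theory Num.Theory.
Import numFieldNormedType.Exports.
Local Open Scope classical_set_scope.
Local Open Scope ring_scope.

Section MxNorm.
Context {R : realType}.

Lemma mx_norm_entry {m n} (B : 'M[R]_(m, n)) i j : `|B i j| <= `|B|.
Proof. by rewrite [leRHS]mx_normrE; exact: (le_bigmax _ _ (i, j)). Qed.

Lemma mx_norm_le {m n} (B : 'M[R]_(m, n)) c :
  0 <= c -> (forall i j, `|B i j| <= c) -> `|B| <= c.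
Proof. by move=> c0 hB; rewrite [leLHS]mx_normrE; apply/bigmax_leP; split=> // -[]. Qed.

Lemma mx_norm_tr {m n} (B : 'M[R]_(m, n)) : `|B^T| = `|B|.
Proof.
suff le_tr k l (C : 'M[R]_(k, l)) : `|C^T| <= `|C|.
  by apply/le_anti/andP; split; rewrite ?le_tr // -{1}(trmxK B) le_tr.
by apply: mx_norm_le => // i j; rewrite mxE mx_norm_entry.
Qed.

Lemma mx_norm_mulmx {m n k} (B : 'M[R]_(m, n)) (C : 'M[R]_(n, k)) :
  `|B *m C| <= n%:R * `|B| * `|C|.
Proof.
apply: mx_norm_le => [|i j]; first by rewrite !mulr_ge0.
rewrite mxE; apply: le_trans (ler_norm_sum _ _ _) _.
rewrite -mulrA mulr_natl -[X in _ *+ X](card_ord n) -sumr_const.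
by apply: ler_sum => l _; rewrite normrM ler_pM ?mx_norm_entry.
Qed.

Lemma mx_norm_le_frob {p} (B : 'M[R]_p) : `|B| <= frob B.
Proof.
have sq_ge0 (C : 'M[R]_p) k : 0 <= \sum_(l < p) C k l ^+ 2.
  by rewrite sumr_ge0 // => l _; rewrite sqr_ge0.
apply: mx_norm_le => [|i j]; first exact: sqrtr_ge0.
rewrite -sqrtr_sqr /frob ler_sqrt; last by rewrite sumr_ge0.
rewrite (bigD1 i) //= (bigD1 j) //= -addrA lerDl addr_ge0 //.
  by rewrite sumr_ge0 // => l _; rewrite sqr_ge0.
by rewrite sumr_ge0.
Qed.

Lemma mx_norm_le_normM {p} (M H : 'M[R]_p) : M \in unitmx ->
  `|H| <= (p%:R * `|invmx M|) ^+ 2 * normM M H.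
Proof.
move=> M_unit.
have eH : H = invmx M *m (M *m H *m M) *m invmx M.
  by rewrite !mulmxA mulVmx // mul1mx mulmxK.
rewrite {1}eH /normM; set X := M *m H *m M.
apply: le_trans (mx_norm_mulmx _ _) _.
apply: (@le_trans _ _ (p%:R * (p%:R * `|invmx M| * `|X|) * `|invmx M|)).
  by apply: ler_wpM2r => //; apply: ler_wpM2l; rewrite ?mx_norm_mulmx.
have -> : p%:R * (p%:R * `|invmx M| * `|X|) * `|invmx M| = (p%:R * `|invmx M|) ^+ 2 * `|X|.
  by ring.
by apply: ler_wpM2l; [exact: exprn_ge0 | exact: mx_norm_le_frob].
Qed.

Lemma compact_mx_norm_sphere n : compact [set v : 'rV[R]_n | `|v| = 1].
Proof.
apply: bounded_closed_compact.
  by exists 1; split=> [|k k1 v]; rewrite ?num_real // /= => ->; exact: ltW.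
have -> : [set v : 'rV[R]_n | `|v| = 1] = (Num.norm : 'rV[R]_n -> R) @^-1` [set 1] by [].
by apply: closed_comp => [v _|]; [exact: norm_continuous | exact: closed_eq].
Qed.

Lemma normM_nbhs {p} {M a : 'M[R]_p} {P : set 'M[R]_p} : M \in unitmx -> nbhs a P ->
  exists2 delta, 0 < delta & forall H, normM M (H - a) < delta -> P H.
Proof.
move=> M_unit /nbhs_normP [e /= e_gt0 aP]; set c := (p%:R * `|invmx M|) ^+ 2.
have c1_gt0 : 0 < c + 1 by rewrite ltr_pwDr // exprn_ge0 // mulr_ge0.
exists (e / (c + 1)) => [|H]; first by rewrite divr_gt0.
rewrite ltr_pdivlMr // => H_near; apply: aP => /=; rewrite distrC.
apply: le_lt_trans (mx_norm_le_normM _ _ M_unit) _; apply: le_lt_trans H_near.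
by rewrite mulrC ler_wpM2l ?sqrtr_ge0 ?lerDl.
Qed.

End MxNorm.

Section VectorNorm.
Context {R : realType} {p : nat} {nv : 'cV[R]_p -> R}.
Hypothesis hnv : is_vnorm nv.

Lemma nv_ge0 x : 0 <= nv x. Proof. by case: hnv. Qed.
Lemma nv_eq0 x : nv x = 0 -> x = 0. Proof. by case: hnv => _ h _ _; exact: h. Qed.
Lemma nvZ a x : nv (a *: x) = `|a| * nv x. Proof. by case: hnv. Qed.
Lemma nvD x y : nv (x + y) <= nv x + nv y. Proof. by case: hnv. Qed.
Lemma nv0 : nv 0 = 0. Proof. by rewrite -(scale0r 0) nvZ normr0 mul0r. Qed.
Lemma nvN x : nv (- x) = nv x. Proof. by rewrite -scaleN1r nvZ normrN normr1 mul1r. Qed.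
Lemma nvB x y : nv (x - y) <= nv x + nv y. Proof. by rewrite -(nvN y) nvD. Qed.

Lemma nv_gt0 x : x != 0 -> 0 < nv x.
Proof. by move=> x0; rewrite lt_def nv_ge0 andbT; apply: contra x0 => /eqP/nv_eq0->. Qed.

Lemma ler_dist_nv x y : `|nv x - nv y| <= nv (x - y).
Proof.
have tri u v : nv u - nv v <= nv (u - v) by rewrite lerBlDr -{1}(subrK v u) nvD.
by rewrite ler_norml tri andbT lerNl opprB -[x - y]opprB nvN tri.
Qed.

Lemma nv_sum {I} (r : seq I) (P : pred I) (f : I -> 'cV[R]_p) :
  nv (\sum_(i <- r | P i) f i) <= \sum_(i <- r | P i) nv (f i).
Proof.
elim/big_rec2 : _ => [|i y1 y2 _ IH]; first by rewrite nv0.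
by apply: le_trans (nvD _ _) _; rewrite lerD2l.
Qed.

Lemma nv_le_mx_norm : exists2 C, 0 < C & forall x, nv x <= C * `|x|.
Proof.
exists (1 + \sum_i nv (delta_mx i 0)) => [|x].
  by rewrite ltr_pwDl // sumr_ge0 // => i _; exact: nv_ge0.
rewrite {1}(matrix_sum_delta x).
apply: le_trans (nv_sum _ _ _) _.
rewrite mulrDl mul1r mulr_suml -[X in X <= _]add0r lerD //.
apply: ler_sum => i _; rewrite big_ord1 nvZ mulrC ler_wpM2l ?nv_ge0 //.
by rewrite [X in x _ X]ord1 mx_norm_entry.
Qed.

Lemma continuous_nv_trmx : continuous (fun v : 'rV[R]_p => nv v^T).
Proof.
have [C C_gt0 hC] := nv_le_mx_norm.
move=> v; apply/(@cvgrPdist_le _ _ _ (nbhs v) (nbhs_filter v)) => e e_gt0.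
apply/(@nbhs_normP _ 'rV[R]_p v (fun w => `|nv v^T - nv w^T| <= e)).
exists (e / C) => [|w /=]; first by rewrite /= divr_gt0.
rewrite ltr_pdivlMr // => vw; apply: le_trans (ler_dist_nv _ _) _.
by rewrite -linearB /=; apply: le_trans (hC _) _; rewrite mx_norm_tr mulrC ltW.
Qed.

Lemma mx_norm_le_nv : (0 < p)%N -> exists2 C, 0 < C & forall x, `|x| <= C * nv x.
Proof.
move=> p_gt0; set sphere := [set v : 'rV[R]_p | `|v| = 1].
have sphere0 : sphere !=set0.
  exists (const_mx 1); apply/le_anti/andP; split.
    by apply: mx_norm_le => // i j; rewrite mxE normr1.
  by have := mx_norm_entry (const_mx 1 : 'rV[R]_p) ord0 (Ordinal p_gt0); rewrite mxE normr1.
have [c c_sphere c_min] := EVT_min_rV sphere0 (compact_mx_norm_sphere p)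
  (continuous_subspaceT continuous_nv_trmx).
have c1 : `|c| = 1 by move: c_sphere; rewrite inE.
have nc_gt0 : 0 < nv c^T.
  by rewrite nv_gt0 // -(inj_eq trmx_inj) trmxK trmx0 -normr_eq0 c1 oner_neq0.
exists (nv c^T)^-1 => [|x]; first by rewrite invr_gt0.
have [->|x0] := eqVneq x 0; first by rewrite normr0 nv0 mulr0.
have nx_gt0 : 0 < `|x| by rewrite normr_gt0.
have := c_min (`|x|^-1 *: x^T).
rewrite inE /sphere /= normrZ mx_norm_tr normfV normr_id mulVf ?gt_eqF // => /(_ erefl).
by rewrite linearZ /= trmxK nvZ normfV normr_id !ler_pdivlMl // mulrC.
Qed.

Lemma nv_mulmx_le : (0 < p)%N ->
  exists2 L, 0 < L & forall (B : 'M[R]_p) y, nv (B *m y) <= L * `|B| * nv y.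
Proof.
move=> p_gt0; have [C1 C1_gt0 hC1] := nv_le_mx_norm.
have [C2 C2_gt0 hC2] := mx_norm_le_nv p_gt0.
exists (C1 * p%:R * C2) => [|B y]; first by rewrite !mulr_gt0 // ltr0n.
apply: le_trans (hC1 _) _; rewrite -!mulrA ler_pM2l //.
apply: le_trans (mx_norm_mulmx B y) _.
by rewrite -mulrA ler_wpM2l // mulrCA ler_wpM2l.
Qed.

Lemma nv_nbhs {xs : 'cV[R]_p} {P : set 'cV[R]_p} : (0 < p)%N -> nbhs xs P ->
  exists2 e, 0 < e & forall x, nv (x - xs) < e -> P x.
Proof.
move=> p_gt0 /nbhs_normP [e /= e_gt0 hP]; have [C C_gt0 hC] := mx_norm_le_nv p_gt0.
exists (e / C) => [|x hx]; first by rewrite divr_gt0.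
apply: hP => /=; rewrite distrC; apply: le_lt_trans (hC _) _.
by rewrite mulrC -ltr_pdivlMr.
Qed.

Lemma near_nv_linearization {f : 'cV[R]_p -> 'cV[R]_p} {a} {A : 'M[R]_p} :
  (0 < p)%N -> differentiable f a -> ('d f a : 'cV[R]_p -> 'cV[R]_p) = mulmx A ->
  forall eta, 0 < eta -> \forall x \near a, nv (f x - f a - A *m (x - a)) <= eta * nv (x - a).
Proof.
move=> p_gt0 df dfA eta eta_gt0.
have [C1 C1_gt0 hC1] := nv_le_mx_norm; have [C2 C2_gt0 hC2] := mx_norm_le_nv p_gt0.
have /eqaddoP/(_ (eta / (C1 * C2))) := diff_locally df.
rewrite dfA divr_gt0 ?mulr_gt0 // => /(_ isT) /nbhs_norm0P [e /= e_gt0 he].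
apply/nbhs_normP; exists e => // x /= hx.
have := he (x - a); rewrite /= distrC in hx => /(_ hx); rewrite !fctE subrK opprD addrA => hlin.
apply: le_trans (hC1 _) _.
apply: le_trans (ler_wpM2l (ltW C1_gt0) hlin) _.
apply: le_trans (ler_wpM2l (ltW C1_gt0) (ler_wpM2l _ (hC2 (x - a)))) _.
  by rewrite ltW // divr_gt0 // mulr_gt0.
by rewrite le_eqVlt; apply/orP; left; apply/eqP; field; rewrite !gt_eqF.
Qed.

Lemma opnorm_le (B : 'M[R]_p) c :
  0 <= c -> (forall v, nv (B *m v) <= c * nv v) -> opnorm nv B <= c.
Proof.
move=> c0 hB; apply: ge_sup => [|_ [v /= hv <-]].
  by exists (nv (B *m 0)), 0 => //=; rewrite nv0 ler01.
by apply: le_trans (hB v) _; rewrite -[leRHS]mulr1 ler_wpM2l.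
Qed.

End VectorNorm.

Lemma powR_lt1 {R : realType} {r d : R} : 0 <= r -> r < 1 -> 0 < d -> powR r d < 1.
Proof.
move=> r_ge0 r_lt1 d_gt0; have := gt0_ltr_powR d_gt0 (x := r) (y := 1).
by rewrite powR1 !nnegrE; apply.
Qed.

Section ContractionWithDrift.
Context {R : realType}.
Variables (a b : nat -> R).
Context {r c d eps delta : R}.
Hypotheses (r_ge0 : 0 <= r) (r_lt1 : r < 1) (d_gt0 : 0 < d) (c_ge0 : 0 <= c).
Hypothesis a_ge0 : forall k, 0 <= a k.

Lemma cvg_contraction : (forall k, a k.+1 <= r * a k) -> a @ \oo --> 0.
Proof.
move=> a_step; have a_geo k : a k <= geometric (a 0) r k.
  elim: k => [|k IH]; first by rewrite /= expr0 mulr1.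
  by rewrite /= exprS mulrCA; apply: le_trans (a_step k) (ler_wpM2l r_ge0 IH).
apply: (@squeeze_cvgr _ _ _ _ (fun=> 0) (geometric (a 0) r)).
- by near=> k; rewrite a_ge0 a_geo.
- exact: cvg_cst.
- by apply: cvg_geometric; rewrite ger0_norm.
Unshelve. all: by end_near.
Qed.

Hypothesis step : forall k, a k < eps -> b k < delta ->
  a k.+1 <= r * a k /\ b k.+1 <= b k + c * powR (a k) d.

(* [V] is a Lyapunov function: since [c + q * (c / (1 - q)) = c / (1 - q)], the
   drift [c * a k ^ d] of [b] is paid for by the geometric decay of [a k ^ d]. *)
Let q := powR r d.
Let V k := b k + c / (1 - q) * powR (a k) d.

Lemma contraction_with_drift : a 0 < eps -> V 0 < delta ->
  forall k, [/\ a k < eps, b k < delta & a k.+1 <= r * a k].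
Proof.
move=> a0_lt V0_lt; have q_lt1 : q < 1 := powR_lt1 r_ge0 r_lt1 d_gt0.
have c'_ge0 : 0 <= c / (1 - q) by rewrite divr_ge0 // subr_ge0 ltW.
have drift_ge0 k : 0 <= c / (1 - q) * powR (a k) d by rewrite mulr_ge0 ?powR_ge0.
have in_region k : a k <= a 0 -> V k <= V 0 -> a k < eps /\ b k < delta.
  move=> ak_le Vk_le; split; first exact: le_lt_trans ak_le a0_lt.
  by move: (drift_ge0 k) Vk_le V0_lt; rewrite /V; lra.
have inv k : a k <= a 0 /\ V k <= V 0.
  elim: k => [|k [IHa IHV]] //; have [ak_lt bk_lt] := in_region k IHa IHV.
  have [a_step b_step] := step k ak_lt bk_lt.
  have a_le : a k.+1 <= a k := le_trans a_step (ler_piMl (a_ge0 k) (ltW r_lt1)).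
  have pa_le : powR (a k.+1) d <= q * powR (a k) d.
    by rewrite /q -powRM //; apply: (ge0_ler_powR (ltW d_gt0)); rewrite ?nnegrE ?mulr_ge0.
  split; first exact: le_trans a_le IHa.
  apply: le_trans IHV; rewrite /V.
  have -> : b k + c / (1 - q) * powR (a k) d =
            b k + c * powR (a k) d + c / (1 - q) * (q * powR (a k) d).
    by field; rewrite subr_eq0 gt_eqF.
  by rewrite lerD // ler_wpM2l.
move=> k; have [ak_le Vk_le] := inv k; have [ak_lt bk_lt] := in_region k ak_le Vk_le.
by split => //; case: (step k ak_lt bk_lt).
Qed.

End ContractionWithDrift.

Lemma cvg0_near_mull_lt {R : realType} (f : R -> R) (c e : R) :
  f x @[x --> 0^'+] --> 0 -> 0 < e -> \forall x \near 0^'+, c * f x < e.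
Proof. by move=> f0 e_gt0; apply: (cvgr_lt _ (cvgMl_tmp f0)); rewrite mulr0. Qed.

Definition qn_linear_convergence {R : realType} {p : nat} (nv : 'cV[R]_p -> R)
    (F : 'cV[R]_p -> 'cV[R]_p) (xs : 'cV[R]_p) (r : R) (x0 : 'cV[R]_p) (H0 : 'M[R]_p) :=
  let x := fun k => (qn_iter F x0 H0 k).1 in
  let H := fun k => (qn_iter F x0 H0 k).2 in
  (forall k, x k != xs -> vvec F (x k) != 0) /\
  (forall k, H k \in unitmx) /\
  ((fun k => nv (x k - xs)) @ \oo --> (0 : R)) /\
  (forall k, nv (x k.+1 - xs) <= r * nv (x k - xs)) /\
  (exists B : R, forall k, opnorm nv (H k) <= B /\ opnorm nv (invmx (H k)) <= B).

Section QuasiNewton.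
Context {R : realType} {p : nat}.
Context {nv : 'cV[R]_p -> R} {L : R}.
Hypothesis hnv : is_vnorm nv.
Hypothesis L_ge0 : 0 <= L.
Hypothesis nv_mulmx : forall (B : 'M[R]_p) y, nv (B *m y) <= L * `|B| * nv y.

Lemma opnorm_le_mx_norm B : opnorm nv B <= L * `|B|.
Proof. by apply: (opnorm_le hnv) => [|v]; rewrite ?mulr_ge0 ?nv_mulmx. Qed.

Lemma nv_le_unitmx (B : 'M[R]_p) y : B \in unitmx -> nv y <= L * `|invmx B| * nv (B *m y).
Proof. by move=> B_unit; rewrite -{1}(mulKmx B_unit y) nv_mulmx. Qed.

Lemma nv_invmx_perturb (B H : 'M[R]_p) v : B \in unitmx -> H \in unitmx ->
  L * `|invmx B| * (L * `|H - B|) <= 1 / 2 ->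
  nv (invmx H *m v) <= 2 * (L * `|invmx B|) * nv v.
Proof.
move=> B_unit H_unit; set c := L * `|invmx B| => small; set z := invmx H *m v.
have c_ge0 : 0 <= c by rewrite mulr_ge0.
have Bz : B *m z = v - (H - B) *m z by rewrite mulmxBl mulKVmx // opprB addrC subrK.
have Bz_le : nv (B *m z) <= nv v + L * `|H - B| * nv z.
  by rewrite Bz; apply: le_trans (nvB hnv _ _) _; rewrite lerD2l nv_mulmx.
have z_le : nv z <= c * nv v + c * (L * `|H - B|) * nv z.
  rewrite -mulrA -mulrDr; apply: le_trans (nv_le_unitmx _ _ B_unit) _.
  by rewrite ler_wpM2l.
rewrite -mulrA; have := ler_wpM2r (nv_ge0 hnv z) small; move: z_le; lra.
Qed.

Context {F : 'cV[R]_p -> 'cV[R]_p} {xs : 'cV[R]_p} {A : 'M[R]_p}.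
Hypothesis A_unit : A \in unitmx.

Local Notation lin_err x := (resid F x - A *m (x - xs)).

Lemma xbar_subE x H :
  xbar F x H - xs = (invmx A - H) *m (A *m (x - xs)) - H *m lin_err x.
Proof.
rewrite /xbar [(invmx A - H) *m _]mulmxBl mulKmx // [H *m lin_err x]mulmxBr.
by rewrite opprB addrA subrK addrAC.
Qed.

Lemma nv_xbar_le x H b e :
  `|H - invmx A| <= b -> nv (lin_err x) <= e * nv (x - xs) ->
  nv (xbar F x H - xs) <= (L * b * (L * `|A|) + L * (`|invmx A| + b) * e) * nv (x - xs).
Proof.
move=> Hb err_le; have b_ge0 : 0 <= b := le_trans (normr_ge0 _) Hb.
have H_le : `|H| <= `|invmx A| + b by rewrite -lerBlDl (le_trans (lerB_dist _ _)).
rewrite xbar_subE mulrDl; apply: le_trans (nvB hnv _ _) _; apply: lerD.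
  apply: le_trans (nv_mulmx _ _) _; rewrite distrC -!mulrA; apply: ler_wpM2l => //.
  by apply: ler_pM => //; [exact: nv_ge0 | rewrite mulrA; exact: nv_mulmx].
apply: le_trans (nv_mulmx _ _) _; rewrite -!mulrA; apply: ler_wpM2l => //.
by apply: ler_pM => //; exact: nv_ge0.
Qed.

Lemma vvecE x : vvec F x =
  A *m (A *m (x - xs)) + (A *m lin_err x - lin_err x + lin_err (F x)).
Proof.
have -> : F x - xs = resid F x + (x - xs) by rewrite /resid addrA subrK.
rewrite /vvec; move: (x - xs) (resid F x) (resid F (F x)) => y g g'.
rewrite !mulmxBr mulmxDr; move: (A *m (A *m y)) (A *m g) (A *m y) => P Q T.
by apply/matrixP => i j; rewrite !mxE; ring.
Qed.

Lemma vvec_neq0 x e : 0 <= e -> nv (F x - xs) <= nv (x - xs) ->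
  nv (lin_err x) <= e * nv (x - xs) -> nv (lin_err (F x)) <= e * nv (F x - xs) ->
  (L * `|invmx A|) ^+ 2 * (L * `|A| + 2) * e < 1 -> x != xs -> vvec F x != 0.
Proof.
move=> e_ge0 Fx_le err1 err2 small x_neq; apply/eqP => v0.
set y := x - xs; have y_gt0 : 0 < nv y by rewrite nv_gt0 // subr_eq0.
(* If [v = 0], then [A (A (x - xs))] is a sum of three linearisation errors, which are
   much smaller than [x - xs]. *)
have AAy : A *m (A *m y) = - (A *m lin_err x - lin_err x + lin_err (F x)).
  by apply/eqP; rewrite -addr_eq0 -vvecE v0.
have AAy_le : nv (A *m (A *m y)) <= (L * `|A| + 2) * e * nv y.
  rewrite AAy (nvN hnv); apply: le_trans (nvD hnv _ _) _.
  apply: le_trans (lerD (nvB hnv _ _) (lexx _)) _.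
  have := le_trans (nv_mulmx _ _) (ler_wpM2l (mulr_ge0 L_ge0 (normr_ge0 A)) err1).
  have := le_trans err2 (ler_wpM2l e_ge0 Fx_le); move: err1; lra.
have K_ge0 : 0 <= (L * `|invmx A|) ^+ 2 by rewrite exprn_ge0 ?mulr_ge0.
have y_le : nv y <= (L * `|invmx A|) ^+ 2 * nv (A *m (A *m y)).
  apply: le_trans (nv_le_unitmx _ _ A_unit) _; rewrite expr2 -[X in _ <= X]mulrA.
  by apply: ler_wpM2l; [rewrite mulr_ge0 | exact: nv_le_unitmx].
have := ler_wpM2l K_ge0 AAy_le.
have : (L * `|invmx A|) ^+ 2 * (L * `|A| + 2) * e * nv y < 1 * nv y by rewrite ltr_pM2r.
by move: y_le; rewrite mul1r !mulrA; lra.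
Qed.

Context {M : 'M[R]_p} {N1 : set 'cV[R]_p} {N2 : set 'M[R]_p} {al1 al2 d : R}.
Hypotheses (al1_ge0 : 0 <= al1) (al2_ge0 : 0 <= al2) (d_gt0 : 0 < d).
Hypothesis N1_nonexpansive : forall x, N1 x -> nv (F x - xs) <= nv (x - xs).
Hypothesis Hbar_update : forall x H, N1 x -> N2 H -> vvec F x != 0 ->
  normM M (Hbar F x H - invmx A) <=
    (1 + al1 * Num.max (powR (nv (F x - xs)) d) (powR (nv (x - xs)) d))
      * normM M (H - invmx A)
    + al2 * Num.max (powR (nv (F x - xs)) d) (powR (nv (x - xs)) d).

Lemma normM_Hbar_le x H delta : N1 x -> N2 H -> normM M (H - invmx A) <= delta ->
  normM M (Hbar F x H - invmx A) <=
    normM M (H - invmx A) + (al1 * delta + al2) * powR (nv (x - xs)) d.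
Proof.
move=> N1x N2H b_le; set t := powR (nv (x - xs)) d; set b := normM M (H - invmx A).
have t_ge0 : 0 <= t := powR_ge0 _ _.
have b_ge0 : 0 <= b := sqrtr_ge0 _.
have c_ge0 : 0 <= al1 * delta + al2 by rewrite addr_ge0 // mulr_ge0 // (le_trans b_ge0).
have [v0|v_neq0] := eqVneq (vvec F x) 0.
  by rewrite /Hbar /= v0 eqxx lerDl mulr_ge0.
apply: le_trans (Hbar_update _ _ N1x N2H v_neq0) _; set m := Num.max _ _.
have m_ge0 : 0 <= m by rewrite le_max powR_ge0.
have m_le : m <= t.
  rewrite ge_max lexx andbT; apply: (ge0_ler_powR (ltW d_gt0)); rewrite ?nnegrE ?nv_ge0 //.
  exact: N1_nonexpansive.
have : m * (al1 * b + al2) <= t * (al1 * delta + al2).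
  by apply: ler_pM; rewrite ?addr_ge0 ?mulr_ge0 // lerD2r ler_wpM2l.
by rewrite -/b; lra.
Qed.

Hypothesis N2_unit : forall H, N2 H -> H \in unitmx.

(* [theta] bounds both the relative linearisation error on the [eps]-ball around [xs]
   and the distance to [invmx A] of the matrices in the [delta]-ball. *)
Section Region.
Variables (r theta eps delta : R).
Hypotheses (r_ge0 : 0 <= r) (r_lt1 : r < 1) (delta_gt0 : 0 < delta).
Hypotheses (theta_gt0 : 0 < theta) (theta_le1 : theta <= 1).
Hypothesis theta_contract : (L * (L * `|A|) + L * (`|invmx A| + 1)) * theta <= r.
Hypothesis theta_perturb : L * `|A| * L * theta <= 1 / 2.
Hypothesis theta_vvec : (L * `|invmx A|) ^+ 2 * (L * `|A| + 2) * theta < 1.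
Hypothesis eps_ball : forall x, nv (x - xs) < eps ->
  N1 x /\ nv (lin_err x) <= theta * nv (x - xs).
Hypothesis delta_ball : forall H, normM M (H - invmx A) < delta ->
  N2 H /\ `|H - invmx A| <= theta.

Section Step.
Variables (x : 'cV[R]_p) (H : 'M[R]_p).
Hypotheses (x_near : nv (x - xs) < eps) (H_near : normM M (H - invmx A) < delta).

Lemma region_unitmx : H \in unitmx.
Proof. by have [/N2_unit] := delta_ball _ H_near. Qed.

Lemma region_xbar : nv (xbar F x H - xs) <= r * nv (x - xs).
Proof.
have [_ err_le] := eps_ball _ x_near; have [_ H_le] := delta_ball _ H_near.
apply: le_trans (nv_xbar_le _ _ _ _ H_le err_le) _; apply: ler_wpM2r; first exact: nv_ge0.
apply: le_trans theta_contract; rewrite mulrDl lerD // -?mulrA ?ler_wpM2l //.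
  by rewrite mulrC -mulrA.
by apply: ler_wpM2r; [exact: ltW | rewrite lerD2l].
Qed.

Lemma region_Hbar : normM M (Hbar F x H - invmx A) <=
  normM M (H - invmx A) + (al1 * delta + al2) * powR (nv (x - xs)) d.
Proof.
have [N1x _] := eps_ball _ x_near; have [N2H _] := delta_ball _ H_near.
exact: normM_Hbar_le _ _ _ N1x N2H (ltW H_near).
Qed.

Lemma region_vvec : x != xs -> vvec F x != 0.
Proof.
have [N1x err1] := eps_ball _ x_near; have Fx_le := N1_nonexpansive _ N1x.
have [_ err2] := eps_ball _ (le_lt_trans Fx_le x_near).
exact: vvec_neq0 _ _ (ltW theta_gt0) Fx_le err1 err2 theta_vvec.
Qed.

Lemma region_opnorm :
  opnorm nv H <= L * (`|invmx A| + 1) + 2 * (L * `|A|) /\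
  opnorm nv (invmx H) <= L * (`|invmx A| + 1) + 2 * (L * `|A|).
Proof.
have [_ H_le] := delta_ball _ H_near.
have LA_ge0 : 0 <= 2 * (L * `|A|) by rewrite !mulr_ge0.
have LAi_ge0 : 0 <= L * (`|invmx A| + 1) by rewrite !mulr_ge0 ?addr_ge0.
split.
  apply: ler_wpDr LA_ge0 _; apply: le_trans (opnorm_le_mx_norm H) _; apply: ler_wpM2l => //.
  by rewrite -lerBlDl (le_trans (lerB_dist _ _)) // (le_trans H_le).
apply: ler_wpDl LAi_ge0 _; apply: (opnorm_le hnv) => // v.
rewrite -[A in 2 * (L * `|A|)]invmxK nv_invmx_perturb ?unitmx_inv ?region_unitmx // invmxK.
by apply: le_trans theta_perturb; rewrite -!mulrA !ler_wpM2l ?mulr_ge0.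
Qed.

End Step.

Lemma qn_iter_region x0 H0 : nv (x0 - xs) < eps ->
  normM M (H0 - invmx A) +
    (al1 * delta + al2) / (1 - powR r d) * powR (nv (x0 - xs)) d < delta ->
  qn_linear_convergence nv F xs r x0 H0.
Proof.
move=> x0_near V0_lt; pose x k := (qn_iter F x0 H0 k).1; pose H k := (qn_iter F x0 H0 k).2.
have c_ge0 : 0 <= al1 * delta + al2 by rewrite addr_ge0 // mulr_ge0 // ltW.
have region k : [/\ nv (x k - xs) < eps, normM M (H k - invmx A) < delta
                  & nv (x k.+1 - xs) <= r * nv (x k - xs)].
  apply: (contraction_with_drift (fun k => nv (x k - xs))
    (fun k => normM M (H k - invmx A)) r_ge0 r_lt1 d_gt0 c_ge0) => // [{}k|{}k x_near H_near].
    exact: nv_ge0.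
  by split; [exact: region_xbar | exact: region_Hbar].
split=> [k|]; first by have [x_near H_near _] := region k; exact: region_vvec.
split=> [k|]; first by have [_ H_near _] := region k; exact: region_unitmx.
split; first by apply: (cvg_contraction _ r_ge0 r_lt1) => k; [exact: nv_ge0 | case: (region k)].
split=> [k|]; first by case: (region k).
by exists (L * (`|invmx A| + 1) + 2 * (L * `|A|)) => k; case: (region k) => *; exact: region_opnorm.
Qed.

End Region.

Lemma exists_small_theta r : 0 < r ->
  exists theta, [/\ 0 < theta, theta < 1,
    (L * (L * `|A|) + L * (`|invmx A| + 1)) * theta < r,
    L * `|A| * L * theta < 1 / 2 &
    (L * `|invmx A|) ^+ 2 * (L * `|A| + 2) * theta < 1].
Proof.
move=> r_gt0; have id_cvg0 : x @[x --> (0 : R)^'+] --> 0 := cvg_at_right_filter cvg_id.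
apply: (@filter_ex _ (0 : R)^'+ _); near=> t; split; near: t.
- exact: nbhs_right_gt.
- exact: nbhs_right_lt.
- exact: (cvg0_near_mull_lt _ _ _ id_cvg0 r_gt0).
- by apply: (cvg0_near_mull_lt _ _ _ id_cvg0); rewrite divr_gt0.
- exact: (cvg0_near_mull_lt _ _ _ id_cvg0 ltr01).
Unshelve. all: by end_near.
Qed.

Hypotheses (p_gt0 : (0 < p)%N) (M_unit : M \in unitmx).
Hypotheses (N1_nbhs : nbhs xs N1) (N2_nbhs : nbhs (invmx A) N2).
Hypotheses (G_diff : differentiable (resid F) xs) (G_xs : resid F xs = 0).
Hypothesis dG_xs : ('d (resid F) xs : 'cV[R]_p -> 'cV[R]_p) = mulmx A.

Lemma qn_local_convergence r : 0 < r < 1 ->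
  exists eps : R, exists delta : R, 0 < eps /\ 0 < delta /\
    forall (x0 : 'cV[R]_p) (H0 : 'M[R]_p),
      nv (x0 - xs) < eps -> normM M (H0 - invmx A) < delta ->
      qn_linear_convergence nv F xs r x0 H0.
Proof.
case/andP => r_gt0 r_lt1.
have [theta [theta_gt0 theta_lt1 theta_contract theta_perturb theta_vvec]] :=
  exists_small_theta _ r_gt0.
have lin := near_nv_linearization hnv p_gt0 G_diff dG_xs _ theta_gt0.
have [eps eps_gt0 eps_ball] : exists2 eps, 0 < eps & forall x, nv (x - xs) < eps ->
    N1 x /\ nv (resid F x - A *m (x - xs)) <= theta * nv (x - xs).
  apply: (nv_nbhs hnv p_gt0); apply: filterI N1_nbhs _.
  by apply: filterS lin => x; rewrite G_xs subr0.
have [delta delta_gt0 delta_ball] : exists2 delta, 0 < delta &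
    forall H, normM M (H - invmx A) < delta -> N2 H /\ `|H - invmx A| <= theta.
  apply: (normM_nbhs M_unit); apply: filterI N2_nbhs _.
  by apply/(@nbhs_normP _ 'M[R]_p (invmx A)); exists theta => //= H /ltW; rewrite distrC.
set c := (al1 * delta + al2) / (1 - powR r d).
have [e [e_gt0 e_lt c_e]] : exists e, [/\ 0 < e, e < eps & c * powR e d < delta / 2].
  apply: (@filter_ex _ (0 : R)^'+ _); near=> t; split; near: t.
  - exact: nbhs_right_gt.
  - exact: nbhs_right_lt.
  - by apply: (cvg0_near_mull_lt _ _ _ (powR_cvg0 d_gt0)); rewrite divr_gt0.
exists e, (delta / 2); do 2 split => //; first by rewrite divr_gt0.
move=> x0 H0 x0_near H0_near.
apply: (qn_iter_region r theta eps delta (ltW r_gt0) r_lt1 delta_gt0 theta_gt0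
  (ltW theta_lt1) (ltW theta_contract) (ltW theta_perturb) theta_vvec eps_ball delta_ball).
  exact: lt_trans e_lt.
have c_ge0 : 0 <= c.
  have q_lt1 := powR_lt1 (ltW r_gt0) r_lt1 d_gt0.
  by rewrite divr_ge0 ?subr_ge0 ?(ltW q_lt1) // addr_ge0 // mulr_ge0 // ltW.
have : c * powR (nv (x0 - xs)) d <= c * powR e d.
  apply: ler_wpM2l => //; apply: (ge0_ler_powR (ltW d_gt0)); rewrite ?nnegrE ?nv_ge0 ?ltW //.
by rewrite -/c; move: H0_near c_e; lra.
Unshelve. all: by end_near.
Qed.

End QuasiNewton.

Theorem theorem1 (R : realType) (p : nat) (hp : (1 <= p)%N)
  (nv : 'cV[R]_p -> R) (hnv : is_vnorm nv)
  (F : 'cV[R]_p -> 'cV[R]_p) (xs : 'cV[R]_p)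
  (* standing assumption: local linear convergence of the MM map *)
  (S : set 'cV[R]_p) (tau : R)
  (hS : nbhs xs S) (htau : 0 < tau < 1)
  (hconv : forall x, S x -> nv (F x - xs) <= tau * nv (x - xs))
  (M : 'M[R]_p) (hMsym : M^T = M) (hMinv : M \in unitmx)
  (* (A1) *)
  (D : set 'cV[R]_p) (dG : 'cV[R]_p -> 'M[R]_p) (d K : R)
  (hDopen : open D) (hDconv : convex_set D) (hDxs : D xs)
  (hdiff : forall x, D x ->
     differentiable (resid F) x /\ ('d (resid F) x : 'cV[R]_p -> 'cV[R]_p) = mulmx (dG x))
  (hGxs : resid F xs = 0) (hdGinv : dG xs \in unitmx) (hd : 0 < d)
  (hHold : forall x, D x -> opnorm nv (dG x - dG xs) <= K * powR (nv (x - xs)) d)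
  (* (A2) *)
  (N1 : set 'cV[R]_p) (N2 : set 'M[R]_p) (al1 al2 : R)
  (hN1 : nbhs xs N1) (hN1sub : N1 `<=` D `&` S)
  (hN2 : nbhs (invmx (dG xs)) N2) (hN2inv : forall H, N2 H -> H \in unitmx)
  (hal1 : 0 <= al1) (hal2 : 0 <= al2)
  (hupd : forall x H, N1 x -> N2 H -> vvec F x != 0 ->
     normM M (Hbar F x H - invmx (dG xs)) <=
       (1 + al1 * Num.max (powR (nv (F x - xs)) d) (powR (nv (x - xs)) d))
         * normM M (H - invmx (dG xs))
       + al2 * Num.max (powR (nv (F x - xs)) d) (powR (nv (x - xs)) d)) :
  forall r : R, 0 < r < 1 ->
  exists eps : R, exists delta : R, 0 < eps /\ 0 < delta /\
    forall (x0 : 'cV[R]_p) (H0 : 'M[R]_p),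
      nv (x0 - xs) < eps -> normM M (H0 - invmx (dG xs)) < delta ->
      let x := fun k => (qn_iter F x0 H0 k).1 in
      let H := fun k => (qn_iter F x0 H0 k).2 in
      (* well-definedness: the update denominator is nonzero unless x_k = x* *)
      (forall k, x k != xs -> vvec F (x k) != 0) /\
      (forall k, H k \in unitmx) /\
      ((fun k => nv (x k - xs)) @ \oo --> (0 : R)) /\
      (forall k, nv (x k.+1 - xs) <= r * nv (x k - xs)) /\
      (exists B : R, forall k, opnorm nv (H k) <= B /\ opnorm nv (invmx (H k)) <= B).
Proof.
move=> r hr; have [L L_gt0 nv_mulmx] := nv_mulmx_le hnv hp.
have [G_diff dG_xs] := hdiff xs hDxs.
have N1_nonexpansive x : N1 x -> nv (F x - xs) <= nv (x - xs).
  case/hN1sub => _ /hconv Fx_le; apply: le_trans Fx_le _.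
  by case/andP: htau => _ /ltW tau_le1; rewrite ler_piMl ?nv_ge0.
exact: (qn_local_convergence hnv (ltW L_gt0) nv_mulmx hdGinv hal1 hal2 hd
  N1_nonexpansive hupd hN2inv hp hMinv hN1 hN2 G_diff hGxs dG_xs r hr).
Qed.
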